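(* Let $N\ge1$ and let $\mathsf{G}=\begin{bmatrix}-\frac13&\frac23&\frac23\\\frac23&-\frac13&\frac23\\\frac23&\frac23&-\frac13\end{bmatrix}$ be the Grover coin. Then the walk operator $U=S(\mathsf{G}\otimes I_2\otimes I_N)$ described in the context is aperiodic, i.e. there is no $\tau\in\mathbb{N}$ with $U^\tau=I_{6N}$.
   Context: Canonical bases $\{\ket{l}_3\},\{\ket{s}_2\},\{\ket{r}_N\}$ of $\mathbb{C}^3,\mathbb{C}^2,\mathbb{C}^N$ ($r$ mod $N$). This is the three-state walk on the Cayley graph of the dihedral group $D_N$ with generators $\{a,b\}$, with shift operator $S=\sum_{r=0}^{N-1}\big[\ket{0}_3\bra{0}_3\otimes\ket{0}_2\bra{0}_2\otimes\ket{r}_N\bra{r-1}_N+\ket{0}_3\bra{0}_3\otimes\ket{1}_2\bra{1}_2\otimes\ket{r}_N\bra{r+1}_N+\ket{1}_3\bra{1}_3\otimes I_2\otimes\ket{r}_N\bra{r}_N+\ket{2}_3\bra{2}_3\otimes(\ket{0}_2\bra{1}_2+\ket{1}_2\bra{0}_2)\otimes\ket{r}_N\bra{r}_N\big]$. *)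

From mathcomp Require Import all_boot all_order all_algebra.
From mathcomp Require Import mxtens.
Set Implicit Arguments. Unset Strict Implicit. Unset Printing Implicit Defensive.
Import GRing.Theory Num.Theory.
Local Open Scope ring_scope.

Section Walk.
Variable C : numClosedFieldType.   (* the complex numbers (any model) *)

Definition i3_0 : 'I_3 := @Ordinal 3 0 isT.
Definition i3_1 : 'I_3 := @Ordinal 3 1 isT.
Definition i3_2 : 'I_3 := @Ordinal 3 2 isT.
Definition i2_0 : 'I_2 := @Ordinal 2 0 isT.
Definition i2_1 : 'I_2 := @Ordinal 2 1 isT.

Definition ketbra n (i j : 'I_n) : 'M[C]_n := delta_mx i j.

Definition shift_fwd N : 'M[C]_N :=
  \matrix_(i, j) ((nat_of_ord i == (nat_of_ord j).+1 %% N)%N)%:R.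
Definition shift_bwd N : 'M[C]_N :=
  \matrix_(i, j) ((nat_of_ord j == (nat_of_ord i).+1 %% N)%N)%:R.

(* Kronecker product A (x) B (x) D, index of |l>|s>|r> is (l*2 + s)*N + r *)
Definition tens3 {a b c} (A : 'M[C]_a) (B : 'M[C]_b) (D : 'M[C]_c)
  : 'M[C]_(a * b * c) := tensmx (tensmx A B) D.

Definition shiftS N : 'M[C]_(3 * 2 * N) :=
    tens3 (ketbra i3_0 i3_0) (ketbra i2_0 i2_0) (shift_fwd N)
  + tens3 (ketbra i3_0 i3_0) (ketbra i2_1 i2_1) (shift_bwd N)
  + tens3 (ketbra i3_1 i3_1) 1%:M 1%:M
  + tens3 (ketbra i3_2 i3_2) (ketbra i2_0 i2_1 + ketbra i2_1 i2_0) 1%:M.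

Definition grover : 'M[C]_3 :=
  \matrix_(i, j) (if i == j then - (1 / 3%:R) else 2%:R / 3%:R).

Definition walkU N : 'M[C]_(3 * 2 * N) :=
  shiftS N *m tens3 grover 1%:M 1%:M.

Definition mxpow n (M : 'M[C]_n) (k : nat) : 'M[C]_n := iter k (mulmx M) 1%:M.

End Walk.

From mathcomp Require Import all_boot all_order all_algebra mxtens.
From mathcomp Require Import perm ring.
Set Implicit Arguments. Unset Strict Implicit. Unset Printing Implicit Defensive.
Import GRing.Theory Num.Theory.
Local Open Scope ring_scope.

(* The vectors w (x) (1,-1) (x) (1,...,1) form a U-invariant copy of C^3 on
   which U acts as M = diag(1,1,-1) G, so U^tau = I forces M^tau e_0 = e_0.
   But A = 3M is an integer matrix whose column sums are all -1 mod 3: the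
   entry sum of A^tau e_0 is (-1)^tau mod 3, whereas A^tau e_0 = 3^tau e_0
   vanishes mod 3. *)

Section TensorAdditive.
Variable R : pzRingType.

Lemma tensmxDl m n p q (A B : 'M[R]_(m, n)) (D : 'M[R]_(p, q)) :
  (A + B) *t D = A *t D + B *t D.
Proof. by apply/matrixP=> i j; rewrite !mxE mulrDl. Qed.

Lemma tensmxDr m n p q (A : 'M[R]_(m, n)) (B D : 'M[R]_(p, q)) :
  A *t (B + D) = A *t B + A *t D.
Proof. by apply/matrixP=> i j; rewrite !mxE mulrDr. Qed.

Lemma tensmxNl m n p q (A : 'M[R]_(m, n)) (D : 'M[R]_(p, q)) :
  (- A) *t D = - (A *t D).
Proof. by apply/matrixP=> i j; rewrite !mxE mulNr. Qed.

Lemma tensmxNr m n p q (A : 'M[R]_(m, n)) (D : 'M[R]_(p, q)) :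
  A *t (- D) = - (A *t D).
Proof. by apply/matrixP=> i j; rewrite !mxE mulrN. Qed.

End TensorAdditive.

Lemma perm_mx_const (R : pzSemiRingType) m n (s : 'S_m) (a : R) :
  perm_mx s *m (const_mx a : 'M_(m, n)) = const_mx a.
Proof. by rewrite -row_permE row_perm_const. Qed.

Lemma iter_mulmx_scale (R : comPzRingType) n (B : 'M[R]_n) (c : R) (v : 'cV_n) k :
  iter k (mulmx (c *: B)) v = c ^+ k *: iter k (mulmx B) v.
Proof.
elim: k => [|k IHk]; first by rewrite scale1r.
by rewrite !iterS IHk -scalemxAl -(scalemxAr (c ^+ k)) scalerA exprS.
Qed.

Lemma map_iter_mulmx (aR rR : pzSemiRingType) (f : {rmorphism aR -> rR}) n
    (B : 'M[aR]_n) (v : 'cV_n) k :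
  map_mx f (iter k (mulmx B) v) = iter k (mulmx (map_mx f B)) (map_mx f v).
Proof. by elim: k => [|k IHk] //; rewrite !iterS map_mxM IHk. Qed.

Lemma mulmx_iter_left_eigen (R : pzRingType) n (u : 'rV[R]_n) (B : 'M_n) (c : R)
    (v : 'cV_n) k :
  u *m B = c *: u -> u *m iter k (mulmx B) v = c ^+ k *: (u *m v).
Proof.
move=> uB; elim: k => [|k IHk]; first by rewrite scale1r.
by rewrite iterS mulmxA uB -scalemxAl IHk scalerA exprS.
Qed.

Lemma map_mx_intr_inj (R : numDomainType) m n :
  injective (map_mx intr : 'M[int]_(m, n) -> 'M[R]_(m, n)).
Proof.
move=> A B /matrixP eqAB; apply/matrixP=> i j.
by apply: (@intr_inj R); have := eqAB i j; rewrite !mxE.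
Qed.

Section Walk.
Variable C : numClosedFieldType.

Lemma mxpow_intertwine n m (A : 'M[C]_n) (B : 'M[C]_m) (E : 'cV_m -> 'cV_n) :
  (forall w, A *m E w = E (B *m w)) ->
  forall k w, mxpow A k *m E w = E (iter k (mulmx B) w).
Proof.
move=> AE; elim=> [|k IHk] w; first by rewrite mul1mx.
by rewrite /mxpow iterS -mulmxA -/(mxpow _ _) IHk AE.
Qed.

Lemma shift_fwdE N : shift_fwd C N = perm_mx (perm (@ord_pred_inj N)).
Proof.
apply/matrixP=> i j; rewrite !mxE permE.
by rewrite -(inj_eq (@ordS_inj N)) ord_predK.
Qed.

Lemma shift_bwdE N : shift_bwd C N = perm_mx (perm (@ordS_inj N)).
Proof. by apply/matrixP=> i j; rewrite !mxE permE eq_sym. Qed.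

Definition alt2 : 'cV[C]_2 := \col_i (-1) ^+ i.

Definition embed N (w : 'cV[C]_3) := w *t alt2 *t (const_mx 1 : 'cV_N).

Definition sign_flip : 'M[C]_3 :=
  ketbra C i3_0 i3_0 + ketbra C i3_1 i3_1 - ketbra C i3_2 i3_2.

Definition reduced_walk : 'M[C]_3 := sign_flip *m grover C.

Lemma ketbra2_sum : ketbra C i2_0 i2_0 + ketbra C i2_1 i2_1 = 1%:M.
Proof.
apply/matrixP=> i j; rewrite !mxE.
by case: i j => [[|[|//]] ?] [[|[|//]] ?]; rewrite -!val_eqE /= ?addr0 ?add0r.
Qed.

Lemma swap_alt2 : (ketbra C i2_0 i2_1 + ketbra C i2_1 i2_0) *m alt2 = - alt2.
Proof.
apply/matrixP=> i j; rewrite !mxE !big_ord_recr big_ord0 /= !mxE.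
by case: i => [[|[|]] ?] //=; rewrite ?ord1 /=; ring.
Qed.

Lemma walkU_embed N w : walkU C N *m embed N w = embed N (reduced_walk *m w).
Proof.
rewrite /walkU -mulmxA /embed /tens3 !tensmx_mul !mul1mx.
rewrite /shiftS !mulmxDl !tensmx_mul !mul1mx shift_fwdE shift_bwdE !perm_mx_const.
rewrite swap_alt2 -tensmxDl -tensmxDr -mulmxDl ketbra2_sum mul1mx.
rewrite tensmxNr -tensmxNl -!tensmxDl.
by rewrite /reduced_walk /sign_flip !mulmxBl !mulmxDl !mulmxA.
Qed.

Lemma embed_inj N : (0 < N)%N -> injective (embed N).
Proof.
move=> N_gt0 v w /matrixP eq_vw; apply/matrixP=> l j; rewrite [j]ord1.
have := eq_vw (mxtens_index (mxtens_index (l, i2_0), Ordinal N_gt0))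
              (mxtens_index (mxtens_index (ord0, ord0), ord0)).
by rewrite !tensmxE !mxE !mulr1.
Qed.

Definition coinZ : 'M[int]_3 :=
  \matrix_(i, j) ((-1) ^+ (i == i3_2) * (if i == j then -1 else 2)).

Lemma map_coinZ : map_mx intr coinZ = 3%:R *: reduced_walk.
Proof.
apply/matrixP=> i j; rewrite !mxE /reduced_walk /sign_flip.
rewrite !big_ord_recr big_ord0 /= !mxE.
have three_neq0 : (3%:R : C) != 0 by rewrite pnatr_eq0.
by case: i => [[|[|[|]]] ?] //=; case: j => [[|[|[|]]] ?] //=; field.
Qed.

End Walk.

Lemma colsum_coinZ_mod3 :
  const_mx 1 *m map_mx (intr : int -> 'F_3) coinZ = -1 *: const_mx 1 :> 'rV_3.
Proof.
apply/matrixP=> i j; rewrite !mxE !big_ord_recr big_ord0 /= !mxE.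
by case: j => [[|[|[|//]]] ?]; apply/eqP.
Qed.

Lemma iter_coinZ_e0_neq k : (0 < k)%N ->
  iter k (mulmx coinZ) (delta_mx i3_0 0 : 'cV_3) != 3 ^+ k *: delta_mx i3_0 0.
Proof.
move=> k_gt0; apply/eqP.
move=> /(congr1 (fun v => (const_mx 1 : 'rV_3) *m map_mx (intr : int -> 'F_3) v)).
rewrite map_iter_mulmx (mulmx_iter_left_eigen _ _ colsum_coinZ_mod3).
rewrite map_mxZ rmorphXn /= (_ : 3%:~R = 0 :> 'F_3); last by apply/eqP.
rewrite expr0n gtn_eqF // scale0r mulmx0 => /matrixP /(_ 0 0).
by rewrite map_delta_mx -colE !mxE mulr1 => /eqP; rewrite signr_eq0.
Qed.

Theorem corollary3p5 (C : numClosedFieldType) (N : nat) (hN : (1 <= N)%N) :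
  ~ (exists tau : nat, (0 < tau)%N /\ mxpow (walkU C N) tau = 1%:M).
Proof.
move=> [k [k_gt0 Uk]].
have fix_e0 :
    iter k (mulmx (reduced_walk C)) (delta_mx i3_0 0 : 'cV_3) = delta_mx i3_0 0.
  apply: (embed_inj hN).
  by rewrite -(mxpow_intertwine (@walkU_embed C N)) Uk mul1mx.
move/eqP: (iter_coinZ_e0_neq k_gt0); apply; apply: (@map_mx_intr_inj C).
rewrite map_iter_mulmx map_coinZ iter_mulmx_scale map_delta_mx fix_e0.
by rewrite map_mxZ map_delta_mx rmorphXn.
Qed.
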